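(* Let $d_1\ge2$, let $\sigma_X,\sigma_Y\in\mathbb R^{d_1}$ be linearly independent, $k_0>0$, $k_1\in\mathbb R$, $b\in\mathbb R$ with $b\ne k_1/k_0$, $z\in\mathbb R\setminus\{0\}$, $\bar r_X\ge0$, and $[\underline c,\bar c]\subseteq[0,1]$. Then $$\inf\{\underline r_Y(z,c,b):p(z,c;\bar r_X)\ge0,\ c\in\mathbb R^{d_1},\ \|c\|\in[\underline c,\bar c],\ \|c\|<1\}$$ $$=\inf\{\underline r_Y(z,c,b):p(z,c;\bar r_X)\ge0,\ c\in\operatorname{span}\{\sigma_X,\sigma_Y\},\ \|c\|\in[\underline c,\bar c],\ \|c\|<1\}.$$
   Context: $\|\cdot\|$ Euclidean norm. $p(z,c;\bar r_X)=\bar r_X^2\|\sigma_X\sqrt{1-\|c\|^2}-zc\|^2-z^2$. For $\|c\|<1$, let $v(z,c,b)=z\sqrt{1-\|c\|^2}(\sigma_Y-b\sigma_X)-(k_1-bk_0)c$, and $\underline r_Y(z,c,b)=|k_1-bk_0|/\|v(z,c,b)\|$ if $v(z,c,b)\ne0$, $\underline r_Y(z,c,b)=+\infty$ if $v(z,c,b)=0$. (In the application, $\sigma_X=\operatorname{cov}(W_1,X)$, $\sigma_Y=\operatorname{cov}(W_1,Y)$, $k_0=\operatorname{var}(X^{\perp W_1})$, $k_1=\operatorname{cov}(Y^{\perp W_1},X^{\perp W_1})$.) *)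

From HB Require Import structures.
From mathcomp Require Import all_boot all_order all_algebra.
From mathcomp Require Import all_classical all_reals all_analysis.
Set Implicit Arguments. Unset Strict Implicit. Unset Printing Implicit Defensive.
Import Order.TTheory GRing.Theory Num.Theory.
Local Open Scope ring_scope.

Section Defs.
Variables (R : realType) (d : nat).

Definition dotv (u w : 'rV[R]_d) : R := \sum_(i < d) u 0 i * w 0 i.
Definition enorm (u : 'rV[R]_d) : R := Num.sqrt (dotv u u).

Definition pfun (sX : 'rV[R]_d) (z : R) (c : 'rV[R]_d) (rX : R) : R :=
  rX ^+ 2 * enorm (Num.sqrt (1 - enorm c ^+ 2) *: sX - z *: c) ^+ 2 - z ^+ 2.

Definition vfun (sX sY : 'rV[R]_d) (k0 k1 : R) (z : R) (c : 'rV[R]_d) (b : R)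
  : 'rV[R]_d :=
  (z * Num.sqrt (1 - enorm c ^+ 2)) *: (sY - b *: sX) - (k1 - b * k0) *: c.

Definition rYlow (sX sY : 'rV[R]_d) (k0 k1 : R) (z : R) (c : 'rV[R]_d) (b : R)
  : \bar R :=
  if vfun sX sY k0 k1 z c b == 0 then +oo%E
  else (`|k1 - b * k0| / enorm (vfun sX sY k0 k1 z c b))%:E.

End Defs.

(* Both p(z,c;r_X) and |v(z,c,b)|^2 depend on c only through |c|, <s_X,c> and
   <s_Y,c>, the last one linearly with coefficient of sign
   sgn(z sqrt(1-|c|^2)(k_1-b k_0)).  Given any c, write c = x + y with x the
   projection of c on s_X, and let u be the component of s_Y orthogonal to s_X.
   Then c' = x + mu u lies in span{s_X,s_Y}, and with mu = +-|y|/|u| it has the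
   norm and s_X-component of c; by Cauchy-Schwarz, |<u,y>| <= |mu| |u|^2, so the
   sign of mu can be chosen to move <s_Y,c'> in the direction that does not
   decrease |v|.  Thus every value of r_Y over all c is bounded below by one over
   the span, and the reverse inequality is inclusion of the index sets. *)

From HB Require Import structures.
From mathcomp Require Import all_boot all_order all_algebra.
From mathcomp Require Import all_classical all_reals all_analysis.
From mathcomp Require Import ring lra.
Import Order.TTheory GRing.Theory Num.Theory.
Local Open Scope classical_set_scope.
Local Open Scope ring_scope.

Lemma exists_signed_root {R : rcfType} (e : R) {A B t : R} :
  0 < A -> t ^+ 2 <= A * B -> exists mu, mu ^+ 2 * A = B /\ e * (mu * A - t) <= 0.
Proof.
move=> A_gt0 tAB.
have B_ge0 : 0 <= B.
  by rewrite -(pmulr_rge0 _ A_gt0); apply: le_trans tAB; rewrite sqr_ge0.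
set m := Num.sqrt (B / A).
have m_ge0 : 0 <= m := sqrtr_ge0 _.
have m2A : m ^+ 2 * A = B.
  by rewrite /m sqr_sqrtr ?divfK ?gt_eqF // divr_ge0 // ltW.
have t_sq : t ^+ 2 <= (m * A) ^+ 2.
  have -> : (m * A) ^+ 2 = A * (m ^+ 2 * A) by ring.
  by rewrite m2A.
have mA_ge0 : 0 <= m * A by rewrite mulr_ge0 // ltW.
have : `|t| <= m * A.
  by rewrite -sqrtr_sqr -[m * A]ger0_norm // -sqrtr_sqr ler_sqrt ?sqr_ge0.
rewrite ler_norml => /andP [t_ge t_le].
have [e_ge0|e_lt0] := leP 0 e.
  by exists (- m); rewrite sqrrN m2A mulNr; split => //; nra.
by exists m; split => //; nra.
Qed.

Section InnerProduct.
Context {R : realType} {d : nat}.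
Implicit Types (u v w : 'rV[R]_d) (a : R).

Lemma dotvC u v : dotv u v = dotv v u.
Proof. by apply: eq_bigr => i _; rewrite mulrC. Qed.

Lemma dotvDl u v w : dotv (u + v) w = dotv u w + dotv v w.
Proof. by rewrite /dotv -big_split; apply: eq_bigr => i _; rewrite mxE mulrDl. Qed.

Lemma dotvZl a u w : dotv (a *: u) w = a * dotv u w.
Proof. by rewrite /dotv mulr_sumr; apply: eq_bigr => i _; rewrite mxE mulrA. Qed.

Lemma dotvNl u w : dotv (- u) w = - dotv u w.
Proof. by rewrite -scaleN1r dotvZl mulN1r. Qed.

Lemma dotvDr u v w : dotv w (u + v) = dotv w u + dotv w v.
Proof. by rewrite dotvC dotvDl !(dotvC w). Qed.

Lemma dotvZr a u w : dotv w (a *: u) = a * dotv w u.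
Proof. by rewrite dotvC dotvZl dotvC. Qed.

Lemma dotvNr u w : dotv w (- u) = - dotv w u.
Proof. by rewrite dotvC dotvNl dotvC. Qed.

Lemma dotv0r u : dotv u 0 = 0.
Proof. by rewrite -(scale0r 0) dotvZr mul0r. Qed.

Definition dotvE := (dotvDl, dotvDr, dotvNl, dotvNr, dotvZl, dotvZr).

Lemma dotvv_ge0 u : 0 <= dotv u u.
Proof. by apply: sumr_ge0 => i _; rewrite -expr2 sqr_ge0. Qed.

Lemma dotvv_eq0 u : (dotv u u == 0) = (u == 0).
Proof.
apply/eqP/eqP => [uu0|->]; last exact: dotv0r.
apply/rowP => i; apply/eqP; rewrite mxE -sqrf_eq0 expr2.
by rewrite (psumr_eq0P _ uu0) // => j _; rewrite -expr2 sqr_ge0.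
Qed.

Lemma dotvv_gt0 u : (0 < dotv u u) = (u != 0).
Proof. by rewrite lt_def dotvv_eq0 dotvv_ge0 andbT. Qed.

Lemma enorm_sq u : enorm u ^+ 2 = dotv u u.
Proof. by rewrite sqr_sqrtr // dotvv_ge0. Qed.

Lemma dotv_CauchySchwarz u v : dotv u v ^+ 2 <= dotv u u * dotv v v.
Proof.
have [->|v0] := eqVneq v 0; first by rewrite !dotv0r expr0n mulr0.
have vv_gt0 : 0 < dotv v v by rewrite dotvv_gt0.
have := dotvv_ge0 (dotv v v *: u - dotv u v *: v).
rewrite !dotvE (dotvC v u) => h.
suff : 0 <= dotv v v * (dotv u u * dotv v v - dotv u v ^+ 2).
  by rewrite pmulr_rge0 // subr_ge0.
by move: h; rewrite expr2; nra.
Qed.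

Lemma dotv_pythagoras u v : dotv u v = 0 ->
  dotv (u + v) (u + v) = dotv u u + dotv v v.
Proof. by move=> uv0; rewrite !dotvE (dotvC v u) uv0 addr0 add0r. Qed.

Lemma dotv_orthoproj v w : v != 0 ->
  dotv v (w - (dotv v w / dotv v v) *: v) = 0.
Proof. by move=> v0; rewrite dotvDr dotvNr dotvZr divfK ?subrr // dotvv_eq0. Qed.

End InnerProduct.

Lemma exists_in_span2 {R : realType} {d : nat} {sX sY : 'rV[R]_d} (c : 'rV[R]_d) (e : R) :
  free [:: sX; sY] ->
  exists2 c', c' \in <<[:: sX; sY]>>%VS &
    [/\ dotv c' c' = dotv c c, dotv sX c' = dotv sX c
      & e * dotv sY c' <= e * dotv sY c].
Proof.
move=> free_XY.
have sX0 : sX != 0 by apply: free_not0 free_XY _; rewrite mem_head.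
have XS : sX \in <<[:: sX; sY]>>%VS by rewrite memv_span ?mem_head.
pose k := dotv sX sY / dotv sX sX; pose u := sY - k *: sX.
pose x := (dotv sX c / dotv sX sX) *: sX; pose y := c - x.
have u0 : u != 0.
  have := free_XY; rewrite (perm_free (permEl (perm_catC [:: sX] [:: sY]))) /=.
  rewrite free_cons => /andP [/negP sY_notin _].
  apply/eqP => /eqP; rewrite subr_eq0 => /eqP sYE.
  by apply: sY_notin; rewrite sYE memvZ // memv_span ?mem_head.
have uS : u \in <<[:: sX; sY]>>%VS.
  by rewrite rpredB ?rpredZ // memv_span // !inE eqxx orbT.
have xS : x \in <<[:: sX; sY]>>%VS by rewrite rpredZ.
have Xu : dotv sX u = 0 by exact: dotv_orthoproj.
have Xy : dotv sX y = 0 by exact: dotv_orthoproj.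
have xu : dotv x u = 0 by rewrite dotvZl Xu mulr0.
have xy : dotv x y = 0 by rewrite dotvZl Xy mulr0.
have cE : c = x + y by rewrite addrC subrK.
have sYE : sY = u + k *: sX by rewrite subrK.
have uu_gt0 : 0 < dotv u u by rewrite dotvv_gt0.
have [mu [mu_sq mu_e]] := exists_signed_root e uu_gt0 (dotv_CauchySchwarz u y).
exists (x + mu *: u); first by rewrite rpredD ?rpredZ.
clearbody k u x y; rewrite {}cE {}sYE.
split.
- rewrite !dotv_pythagoras //; last by rewrite dotvZr xu mulr0.
  by rewrite dotvZl dotvZr mulrA -expr2 mu_sq.
- by rewrite !dotvDr dotvZr Xu Xy mulr0.
- rewrite !(dotvDl, dotvDr, dotvZl, dotvZr) Xu Xy (dotvC u x) xu.
  by move: mu_e; lra.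
Qed.

Section Reduction.
Context {R : realType} {d : nat} {sX sY : 'rV[R]_d} {k0 k1 z b : R}.
Implicit Types c : 'rV[R]_d.

Lemma enorm_eq {c c'} : dotv c' c' = dotv c c -> enorm c' = enorm c.
Proof. by rewrite /enorm => ->. Qed.

Lemma pfun_eq rX {c c'} : dotv c' c' = dotv c c ->
  dotv sX c' = dotv sX c -> pfun sX z c' rX = pfun sX z c rX.
Proof.
move=> cc' Xc'; rewrite /pfun (enorm_eq cc') !enorm_sq !dotvE.
by rewrite (dotvC c sX) (dotvC c' sX) cc' Xc'.
Qed.

Lemma dotv_vfun_le {c c'} : dotv c' c' = dotv c c -> dotv sX c' = dotv sX c ->
  let e := z * Num.sqrt (1 - enorm c ^+ 2) * (k1 - b * k0) in
  e * dotv sY c' <= e * dotv sY c ->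
  dotv (vfun sX sY k0 k1 z c b) (vfun sX sY k0 k1 z c b) <=
  dotv (vfun sX sY k0 k1 z c' b) (vfun sX sY k0 k1 z c' b).
Proof.
move=> cc' Xc' /=; rewrite /vfun (enorm_eq cc').
set s := Num.sqrt _; set K := k1 - b * k0 => Yc'.
rewrite !dotvE (dotvC c sX) (dotvC c' sX) (dotvC c sY) (dotvC c' sY) cc' Xc'.
nra.
Qed.

Lemma rYlow_le {c c'} :
  dotv (vfun sX sY k0 k1 z c b) (vfun sX sY k0 k1 z c b) <=
  dotv (vfun sX sY k0 k1 z c' b) (vfun sX sY k0 k1 z c' b) ->
  (rYlow sX sY k0 k1 z c' b <= rYlow sX sY k0 k1 z c b)%E.
Proof.
rewrite /rYlow /enorm; set v := vfun _ _ _ _ _ c b; set v' := vfun _ _ _ _ _ c' b.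
move=> vv'.
have [_|v0] := eqVneq v 0; first by rewrite leey.
have vv_gt0 : 0 < dotv v v by rewrite dotvv_gt0.
have vv'_gt0 : 0 < dotv v' v' := lt_le_trans vv_gt0 vv'.
have -> : (v' == 0) = false by apply/negbTE; rewrite -dotvv_gt0.
by rewrite lee_fin ler_wpM2l // lef_pV2 ?posrE ?sqrtr_gt0 // ler_wsqrtr.
Qed.

End Reduction.

Theorem mainTheorem16 (R : realType) (d : nat) (sX sY : 'rV[R]_d)
  (k0 k1 b z rX cl cu : R) :
  (2 <= d)%N ->
  free [:: sX; sY] ->
  0 < k0 ->
  b != k1 / k0 ->
  z != 0 ->
  0 <= rX ->
  (forall x : R, cl <= x <= cu -> 0 <= x <= 1) ->
  ereal_inf [set rYlow sX sY k0 k1 z c b | c in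
     [set c : 'rV[R]_d | 0 <= pfun sX z c rX /\
        cl <= enorm c <= cu /\ enorm c < 1]]
  = ereal_inf [set rYlow sX sY k0 k1 z c b | c in
     [set c : 'rV[R]_d | 0 <= pfun sX z c rX /\
        c \in <<[:: sX; sY]>>%VS /\
        cl <= enorm c <= cu /\ enorm c < 1]].
Proof.
move=> _ free_XY _ _ _ _ _.
apply/eqP; rewrite eq_le; apply/andP; split.
  by apply: ereal_inf_le_tmp => _ [c [p_ge0 [_ c_ok]] <-]; exists c.
apply: le_ereal_inf_tmp => _ [c [p_ge0 c_ok] <-].
have [c' c'S [cc' Xc' Yc']] :=
  exists_in_span2 c (z * Num.sqrt (1 - enorm c ^+ 2) * (k1 - b * k0)) free_XY.
apply: (le_trans _ (rYlow_le (dotv_vfun_le cc' Xc' Yc'))).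
by apply: ereal_inf_lbound; exists c' => //; rewrite /= (pfun_eq _ cc' Xc') (enorm_eq cc').
Qed.
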